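(* Let $n\ge 3$. Then $\mathit{DCD}(n)$ is isomorphic to an incidence sum $\mathcal C_1\oplus_I\mathcal C_2$ such that: (1) $\mathcal C_1$ is a configuration of type $\left(\binom{2n-2}{n-2}_n,\ \binom{2n-2}{n-1}_{n-1}\right)$; (2) $\mathcal C_2$ is a configuration of type $\left(\binom{2n-2}{n-1}_{n-1},\ \binom{2n-2}{n-2}_n\right)$; (3) the set $I$ of new incidences consists of $\binom{2n-2}{n-1}$ point-line pairs whose points belong to $\mathcal C_2$ and whose lines belong to $\mathcal C_1$; (4) $\mathcal C_1$ and $\mathcal C_2$ are dual to each other; (5) $\mathcal C_1$ and $\mathcal C_2$ are flag-transitive.
   Context: $\mathit{DCD}(n)$: the combinatorial configuration whose points are the $n$-subsets and whose lines are the $(n-1)$-subsets of $\{1,\dots,2n-1\}$, a point being incident with a line iff the line's subset is contained in the point's subset (equivalently, the points and lines cut out by $2n-1$ hyperplanes in general position in projective $n$-space, by $n$ and by $n-1$ of them respectively). A configuration of type $(p_q, b_k)$ is an incidence structure with $p$ points and $b$ lines (blocks), each point incident with exactly $q$ lines and each line with exactly $k$ points. Incidence sum: given configurations $\mathcal C_1,\mathcal C_2$ with point sets $\mathcal P_1,\mathcal P_2$ and line sets $\mathcal L_1,\mathcal L_2$, and a set $I\subseteq \mathcal P_1\times\mathcal L_2\cup\mathcal P_2\times\mathcal L_1$, the incidence sum $\mathcal C_1\oplus_I\mathcal C_2$ is the incidence structure with points $\mathcal P_1\sqcup\mathcal P_2$, lines $\mathcal L_1\sqcup\mathcal L_2$,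 and incidences those of $\mathcal C_1$, those of $\mathcal C_2$, and the pairs in $I$. Two configurations are dual to each other if one is isomorphic to the other with the roles of points and lines interchanged. A configuration is flag-transitive if its automorphism group (incidence-preserving bijections of points and of lines) acts transitively on the set of incident point-line pairs. *)

From mathcomp Require Import all_boot.
Set Implicit Arguments. Unset Strict Implicit. Unset Printing Implicit Defensive.

Record incstr := IncStr {
  pt : finType;
  ln : finType;
  inc : pt -> ln -> bool
}.

Definition config_type (C : incstr) (p q b k : nat) : Prop :=
  [/\ #|{: pt C}| = p, #|{: ln C}| = b,
      forall x : pt C, #|[set l : ln C | inc x l]| = q
    & forall l : ln C, #|[set x : pt C | inc x l]| = k].

Definition isomorphic (C D : incstr) : Prop :=
  exists (f : pt C -> pt D) (g : ln C -> ln D),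
    [/\ bijective f, bijective g & forall x l, inc (f x) (g l) = inc x l].

Definition dual (C : incstr) : incstr :=
  @IncStr (ln C) (pt C) (fun l x => inc x l).

Definition dual_to (C D : incstr) : Prop := isomorphic C (dual D).

Definition automorphism (C : incstr) (f : pt C -> pt C) (g : ln C -> ln C) : Prop :=
  [/\ bijective f, bijective g & forall x l, inc (f x) (g l) = inc x l].

Definition flag_transitive (C : incstr) : Prop :=
  forall (x x' : pt C) (l l' : ln C), inc x l -> inc x' l' ->
    exists (f : pt C -> pt C) (g : ln C -> ln C), @automorphism C f g /\ f x = x' /\ g l = l'.

(* Possible new incidences of an incidence sum: P1 x L2  ∪  P2 x L1. *)
Definition cross_pairs (C1 C2 : incstr) : finType :=
  ((pt C1 * ln C2) + (pt C2 * ln C1))%type.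

Definition isum_inc (C1 C2 : incstr) (I : {set cross_pairs C1 C2})
  (x : pt C1 + pt C2) (l : ln C1 + ln C2) : bool :=
  match x, l with
  | inl p, inl m => inc p m
  | inr p, inr m => inc p m
  | inl p, inr m => inl (p, m) \in I
  | inr p, inl m => inr (p, m) \in I
  end.

Definition isum (C1 C2 : incstr) (I : {set cross_pairs C1 C2}) : incstr :=
  @IncStr (pt C1 + pt C2)%type (ln C1 + ln C2)%type (isum_inc I).

(* DCD(n): points = n-subsets, lines = (n-1)-subsets of {1..2n-1}
   (modelled as 'I_(2n-1)); a point is on a line iff line ⊆ point. *)
Definition DCD (n : nat) : incstr :=
  @IncStr {A : {set 'I_(2 * n - 1)} | #|A| == n}
          {B : {set 'I_(2 * n - 1)} | #|B| == n.-1}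
          (fun A B => val B \subset val A).

Definition in_P2L1 (C1 C2 : incstr) (c : cross_pairs C1 C2) : bool :=
  if c is inr _ then true else false.

(* Fix a point e of the (2n-1)-element ground set and let S be the remaining
   2n-2 points.  An n-subset either avoids e, and is then an n-subset of S, or is
   e together with an (n-1)-subset of S; likewise for (n-1)-subsets.  So DCD(n)
   splits into C1 = (n-subsets, (n-1)-subsets of S) and C2 = ((n-1)-subsets,
   (n-2)-subsets of S), both with incidence given by inclusion, and the only
   incidences across are B ⊆ A ∪ {e} with A a point of C2 and B a line of C1,
   i.e. B = A.  Complementation in S turns C1 into the dual of C2, and any flag
   of either configuration is moved to any other by a permutation of S. *)

From mathcomp Require Import all_boot fingroup perm zify.
Set Implicit Arguments. Unset Strict Implicit. Unset Printing Implicit Defensive.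

Lemma isomorphic_sym C D : isomorphic C D -> isomorphic D C.
Proof.
case=> f [g [[f' ff' f'f] [g' gg' g'g] fg]].
exists f', g'; split; [by exists f | by exists g | ].
by move=> y m; rewrite -fg f'f g'g.
Qed.

Lemma isomorphic_dual C D : isomorphic C D -> isomorphic (dual C) (dual D).
Proof. by case=> f [g [bf bg fg]]; exists g, f; split => // l x; exact: fg. Qed.

(* [config_type C p q b k] unfolds to [pt_type C p q /\ pt_type (dual C) b k]. *)
Definition pt_type (C : incstr) (p q : nat) : Prop :=
  #|{: pt C}| = p /\ forall x : pt C, #|[set l : ln C | inc x l]| = q.

Lemma pt_type_iso C D p q : isomorphic C D -> pt_type D p q -> pt_type C p q.
Proof.
case=> f [g [bf bg fg]] [cardD degD]; split; first by rewrite (bij_eq_card bf).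
move=> x; rewrite -(degD (f x)) -(on_card_preimset (onW_bij _ bg)).
by apply: eq_card => l; rewrite !inE fg.
Qed.

Section FinSets.
Variable X : finType.

Lemma card_ksub m : #|{: {A : {set X} | #|A| == m}}| = 'C(#|X|, m).
Proof. by rewrite card_sig -card_draws; apply: eq_card => A; rewrite inE. Qed.

Lemma card_sig_set (P Q : pred X) :
  #|[set x : {x | P x} | Q (val x)]| = #|[set x | P x & Q x]|.
Proof.
rewrite -(card_imset _ val_inj); apply: eq_card => x; rewrite inE.
apply/imsetP/andP => [[y + ->] | [Px Qx]].
  by rewrite inE => Qy; split; first exact: valP.
by exists (exist _ x Px); rewrite ?inE.
Qed.

Lemma ksub_subsetE m (A B : {A : {set X} | #|A| == m}) :
  (val B \subset val A) = (A == B).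
Proof.
apply/idP/eqP => [sBA | -> //]; apply/val_inj/eqP.
by rewrite eq_sym eqEcard sBA (eqP (valP A)) (eqP (valP B)) /=.
Qed.

Lemma subsetU1_notin (a : X) (A B : {set X}) :
  a \notin B -> (B \subset a |: A) = (B \subset A).
Proof.
move=> aB; apply/idP/idP => [/subsetP sBA | sBA].
  apply/subsetP => x xB; case/setU1P: (sBA x xB) => // xa.
  by rewrite -xa xB in aB.
exact: subset_trans sBA (subsetU1 a A).
Qed.

End FinSets.

Lemma imset_subset_inj (aT rT : finType) (f : aT -> rT) (A B : {set aT}) :
  injective f -> (f @: B \subset f @: A) = (B \subset A).
Proof.
move=> injf; apply/idP/idP => [/subsetP sBA | ]; last exact: imsetS.
by apply/subsetP => x xB; rewrite -(mem_imset _ _ injf) sBA ?imset_f.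
Qed.

(* [DCD n] is [subset_config 'I_(2 * n - 1) n] by definition. *)
Definition subset_config (T : finType) (k : nat) : incstr :=
  @IncStr {A : {set T} | #|A| == k} {B : {set T} | #|B| == k.-1}
          (fun A B => val B \subset val A).

Section SubsetConfig.
Variable T : finType.

Lemma subset_config_pt_type k : 0 < k -> pt_type (subset_config T k) 'C(#|T|, k) k.
Proof.
case: k => // k _; split => [|x]; first exact: card_ksub.
rewrite /= (card_sig_set (fun B : {set T} => #|B| == k) (fun B => B \subset val x)).
rewrite -[RHS]binSn -[in RHS](eqP (valP x)) -cards_draws.
by apply: eq_card => B; rewrite !inE andbC.
Qed.

Lemma card_setC_ksub m m' (A : {set T}) : m + m' = #|T| -> #|A| == m -> #|~: A| == m'.
Proof. by have := cardsC A; lia. Qed.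

Definition setC_ksub m m' (hT : m + m' = #|T|) (X : {A : {set T} | #|A| == m}) :
  {A : {set T} | #|A| == m'} := exist _ (~: val X) (card_setC_ksub hT (valP X)).

Lemma setC_ksub_bij m m' (hT : m + m' = #|T|) : bijective (setC_ksub hT).
Proof.
have hT' : m' + m = #|T| by rewrite addnC.
by exists (setC_ksub hT') => X; apply: val_inj; rewrite /= setCK.
Qed.

Lemma subset_config_dual k j : 0 < k -> 0 < j -> k + j = #|T|.+1 ->
  isomorphic (subset_config T k) (dual (subset_config T j)).
Proof.
move=> k0 j0 hkj.
have hpt : k + j.-1 = #|T| by lia.
have hln : k.-1 + j = #|T| by lia.
exists (setC_ksub hpt), (setC_ksub hln); split; try exact: setC_ksub_bij.
by move=> x l /=; rewrite setCS.
Qed.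

Lemma subset_config_type k j : 0 < k -> 0 < j -> k + j = #|T|.+1 ->
  config_type (subset_config T k) 'C(#|T|, k) k 'C(#|T|, j) j.
Proof.
move=> k0 j0 hkj.
have [cardP degP] := subset_config_pt_type k0.
have [cardL degL] : pt_type (dual (subset_config T k)) 'C(#|T|, j) j.
  apply: pt_type_iso (isomorphic_dual (subset_config_dual k0 j0 hkj)) _.
  exact: subset_config_pt_type.
by split.
Qed.

End SubsetConfig.

Lemma eq_fibres_perm (X : finType) (c d : X -> nat) :
  (forall m, #|[set x | c x == m]| = #|[set x | d x == m]|) ->
  exists s : {perm X}, forall x, d (s x) = c x.
Proof.
have [N] := ubnP #|[set x | c x != d x]|.
elim: N d => // N IHN d ltN fibres.
have [E0 | [x x_bad]] := set_0Vmem [set x | c x != d x].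
  exists 1%g => x; rewrite perm1; apply/eqP; rewrite eq_sym.
  by apply/negbNE; move/setP: E0 => /(_ x); rewrite !inE => ->.
have [y dy cy] : exists2 y, d y == c x & c y != c x.
  have [sub | /subsetPn [y]] := boolP ([set z | d z == c x] \subset [set z | c z == c x]).
    have /(_ x) := subset_cardP (esym (fibres (c x))) sub.
    by rewrite !inE eqxx; move: x_bad; rewrite inE eq_sym => /negbTE ->.
  by rewrite !inE => dy cy; exists y.
pose d' z := d (tperm x y z).
have fibres' m : #|[set z | c z == m]| = #|[set z | d' z == m]|.
  rewrite fibres -(card_preimset _ (@perm_inj _ (tperm x y))).
  by apply: eq_card => z; rewrite !inE.
have fewer_bad : #|[set z | c z != d' z]| < #|[set z | c z != d z]|.
  apply: proper_card; apply/properP; split.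
    apply/subsetP => z; rewrite !inE /d'.
    by case: tpermP => [-> | -> | //]; rewrite (eqP dy) ?eqxx.
  by exists x => //; rewrite !inE /d' tpermL (eqP dy) eqxx.
have [s Hs] := IHN d' (leq_trans fewer_bad (ltnSE ltN)) fibres'.
by exists (s * tperm x y)%g => z; rewrite permM; exact: Hs.
Qed.

Section Flags.
Variable T : finType.

Definition flag_colour (A B : {set T}) (x : T) : nat := (x \in A) + (x \in B).

Lemma flag_colour_fibre (A B : {set T}) m : B \subset A ->
  [set x | flag_colour A B x == m] =
  match m with 0 => ~: A | 1 => A :\: B | 2 => B | _ => set0 end.
Proof.
move=> /subsetP sBA; apply/setP => x; rewrite /flag_colour.
have := sBA x; case: m => [|[|[|m]]]; rewrite !inE;
  by case: (x \in B); case: (x \in A) => // ->.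
Qed.

Lemma flag_colour_gt0 (A B : {set T}) x : B \subset A -> (0 < flag_colour A B x) = (x \in A).
Proof. by move/subsetP/(_ x); rewrite /flag_colour; case: (x \in A); case: (x \in B) => // ->. Qed.

Lemma flag_colour_eq2 (A B : {set T}) x : B \subset A -> (flag_colour A B x == 2) = (x \in B).
Proof. by move/subsetP/(_ x); rewrite /flag_colour; case: (x \in A); case: (x \in B) => // ->. Qed.

Lemma flag_perm (A B A' B' : {set T}) : B \subset A -> B' \subset A' ->
  #|A| = #|A'| -> #|B| = #|B'| ->
  exists s : {perm T}, s @: A = A' /\ s @: B = B'.
Proof.
move=> sBA sBA' cA cB.
have [s Hs] : exists s : {perm T}, forall x, flag_colour A' B' (s x) = flag_colour A B x.
  apply: eq_fibres_perm => m; rewrite !flag_colour_fibre //.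
  case: m => [|[|[|m]]] //; first by have := cardsC A; have := cardsC A'; lia.
  by rewrite !cardsD (setIidPr sBA) (setIidPr sBA') cA cB.
exists s; split; apply/setP => y; rewrite -[y](permKV s) (mem_imset _ _ perm_inj).
  by rewrite -(flag_colour_gt0 _ sBA') Hs flag_colour_gt0.
by rewrite -(flag_colour_eq2 _ sBA') Hs flag_colour_eq2.
Qed.

Lemma card_perm_ksub (s : {perm T}) m (A : {set T}) : #|A| == m -> #|s @: A| == m.
Proof. by rewrite (card_imset _ perm_inj). Qed.

Definition perm_ksub (s : {perm T}) m (X : {A : {set T} | #|A| == m}) :
  {A : {set T} | #|A| == m} := exist _ (s @: val X) (card_perm_ksub s (valP X)).

Lemma perm_ksub_bij (s : {perm T}) m : bijective (@perm_ksub s m).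
Proof.
exists (@perm_ksub s^-1 m) => X; apply: val_inj;
  by rewrite /= -imset_comp (eq_imset _ (_ : _ =1 id)) ?imset_id // => x /=;
  rewrite ?permK ?permKV.
Qed.

Lemma subset_config_flag_transitive k : flag_transitive (subset_config T k).
Proof.
move=> x x' l l' xl x'l'.
have card_eq m (Y Y' : {A : {set T} | #|A| == m}) : #|val Y| = #|val Y'|.
  by rewrite (eqP (valP Y)) (eqP (valP Y')).
have [s [sx sl]] := flag_perm xl x'l' (card_eq _ x x') (card_eq _ l l').
exists (@perm_ksub s k), (@perm_ksub s k.-1); split; last by split; apply: val_inj.
split; try exact: perm_ksub_bij.
by move=> X L /=; rewrite imset_subset_inj //; exact: perm_inj.
Qed.

End Flags.

Section Puncture.
Variables (T : finType) (e : T).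
Local Notation S := {x : T | x != e}.

Lemma card_punctured : #|{: S}| = #|T|.-1.
Proof. by rewrite card_sig -(cardC1 e); apply: eq_card => x; rewrite !inE. Qed.

Lemma notin_val_set (A : {set S}) : e \notin val @: A.
Proof. by apply/imsetP => -[x _ ex]; move: (valP x); rewrite -ex eqxx. Qed.

Lemma card_val_ksub m (A : {set S}) : #|A| == m -> #|val @: A| == m.
Proof. by rewrite (card_imset _ val_inj). Qed.

Lemma card_setU1_val_ksub m (A : {set S}) : #|A| == m -> #|e |: val @: A| == m.+1.
Proof. by rewrite cardsU1 notin_val_set (card_imset _ val_inj). Qed.

Definition glue k (X : {A : {set S} | #|A| == k.+1} + {A : {set S} | #|A| == k}) :
    {A : {set T} | #|A| == k.+1} :=
  match X with
  | inl A => exist _ (val @: val A) (card_val_ksub (valP A))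
  | inr A => exist _ (e |: val @: val A) (card_setU1_val_ksub (valP A))
  end.

Lemma glue_inj k : injective (@glue k).
Proof.
have val_set_inj : injective (fun A : {set S} => val @: A) := imset_inj val_inj.
move=> [A|A] [B|B] /(congr1 val) /= eqAB.
- by congr inl; apply/val_inj/val_set_inj.
- by have := notin_val_set (val A); rewrite eqAB setU11.
- by have := notin_val_set (val B); rewrite -eqAB setU11.
- congr inr; apply/val_inj/val_set_inj.
  by rewrite -(setU1K (notin_val_set (val A))) eqAB setU1K ?notin_val_set.
Qed.

Lemma glue_bij k : bijective (@glue k).
Proof.
apply: inj_card_bij (@glue_inj k) _.
rewrite card_sum !card_ksub card_punctured -binS prednK //.
by apply/card_gt0P; exists e.
Qed.

Definition diag_pairs k : {set cross_pairs (subset_config S k.+2) (subset_config S k.+1)} :=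
  [set inr (A, A) | A : {A : {set S} | #|A| == k.+1}].

Lemma mem_diag_pairs k A B : (inr (A, B) \in diag_pairs k) = (A == B).
Proof. by apply/imsetP/eqP => [[C _ [-> ->]] | ->] //; exists B. Qed.

Lemma diag_pairs_P2L1 k c : c \in diag_pairs k -> in_P2L1 c.
Proof. by case/imsetP => A _ ->. Qed.

Lemma card_diag_pairs k : #|diag_pairs k| = 'C(#|T|.-1, k.+1).
Proof. by rewrite card_imset ?cardsT ?card_ksub ?card_punctured // => A B [->]. Qed.

Lemma glue_inc k X L :
  (val (@glue k L) \subset val (@glue k.+1 X)) = isum_inc (diag_pairs k) X L.
Proof.
have val_setS (A B : {set S}) : (val @: B \subset val @: A) = (B \subset A).
  exact: imset_subset_inj val_inj.
case: X L => [A|A] [B|B] /=; rewrite ?mem_diag_pairs.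
- exact: val_setS.
- rewrite subUset sub1set (negbTE (notin_val_set _)).
  by apply/esym/imsetP => -[].
- by rewrite subsetU1_notin ?notin_val_set // val_setS ksub_subsetE.
- by rewrite subUset sub1set setU11 subsetU1_notin ?notin_val_set // val_setS.
Qed.

Lemma punctured_split k : isomorphic (subset_config T k.+2) (isum (diag_pairs k)).
Proof.
apply: isomorphic_sym; exists (@glue k.+1), (@glue k).
by split; [exact: glue_bij | exact: glue_bij | exact: glue_inc].
Qed.

End Puncture.

Theorem theorem4p1 (n : nat) : 3 <= n ->
  exists (C1 C2 : incstr) (I : {set cross_pairs C1 C2}),
    [/\ isomorphic (DCD n) (isum I),
        config_type C1 'C(2 * n - 2, n - 2) n 'C(2 * n - 2, n - 1) (n - 1),
        config_type C2 'C(2 * n - 2, n - 1) (n - 1) 'C(2 * n - 2, n - 2) n,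
        (forall c, c \in I -> @in_P2L1 C1 C2 c) /\ #|I| = 'C(2 * n - 2, n - 1)
      & [/\ dual_to C1 C2, flag_transitive C1 & flag_transitive C2]].
Proof.
case: n => [|[|k]] // k3.
have N0 : 0 < 2 * k.+2 - 1 by lia.
pose e : 'I_(2 * k.+2 - 1) := Ordinal N0.
have cardS : #|{: {x | x != e}}| = 2 * k.+2 - 2 by rewrite card_punctured card_ord; lia.
have sizes : k.+2 + k.+1 = #|{: {x | x != e}}|.+1 by rewrite cardS; lia.
have binC : 'C(2 * k.+2 - 2, k.+2) = 'C(2 * k.+2 - 2, k.+2 - 2).
  by rewrite -[in RHS]bin_sub; [congr 'C(_, _) | ]; lia.
have -> : k.+2 - 1 = k.+1 by lia.
exists (subset_config {x | x != e} k.+2), (subset_config {x | x != e} k.+1).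
exists (diag_pairs e k); split.
- exact: punctured_split.
- by have := subset_config_type (ltn0Sn _) (ltn0Sn _) sizes; rewrite cardS binC.
- have sizes' : k.+1 + k.+2 = #|{: {x | x != e}}|.+1 by rewrite addnC.
  by have := subset_config_type (ltn0Sn _) (ltn0Sn _) sizes'; rewrite cardS binC.
- by split; [exact: diag_pairs_P2L1 | rewrite card_diag_pairs card_ord; congr 'C(_, _); lia].
- split; first exact: subset_config_dual (ltn0Sn _) (ltn0Sn _) sizes.
  all: exact: subset_config_flag_transitive.
Qed.
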